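(* Let $f_{\boldsymbol{\theta}}$ be the conformer aggregation network described in the context, with fixed parameters $\boldsymbol{\theta}$. Let $G$ be the 2D graph of a molecule and let $(S_1,\dots,S_K)$, with $S_k=\{(\mathbf{r}_{k,i},Z_{k,i})\}_{i=1}^N$ for $1\le k\le K$, be a sequence of $K$ conformers of that molecule, and let $\hat y=f_{\boldsymbol{\theta}}(G,(S_1,\dots,S_K))$. Then: (i) for any $g_1,\dots,g_K\in E(3)$, $$f_{\boldsymbol{\theta}}(G,(g_1S_1,\dots,g_KS_K))=f_{\boldsymbol{\theta}}(G,(S_1,\dots,S_K));$$ (ii) for any permutation $\pi\in\mathrm{Sym}([K])$, $$f_{\boldsymbol{\theta}}(G,(S_{\pi(1)},\dots,S_{\pi(K)}))=f_{\boldsymbol{\theta}}(G,(S_1,\dots,S_K)).$$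
   Context: $E(3)$ is the Euclidean group of $\mathbb{R}^3$ (translations, rotations, reflections/inversion); $g\in E(3)$, $g(\mathbf r)=Q\mathbf r+\mathbf t$ with $Q$ orthogonal, acts on a conformer by $gS=\{(g(\mathbf r_i),Z_i)\}_{i=1}^N$ (atomic numbers unchanged). $[K]=\{1,\dots,K\}$. 2D branch: the molecule's 2D graph is $G=(V,E)$ (atoms as nodes, covalent bonds as edges) with node features $\mathbf h_v^{(0)}$ and edge features. $L$ graph-attention (GAT) layers compute $\mathbf h_v^{(\ell)}=\sum_{u\in N(v)}\alpha_{v,u}\mathbf W\mathbf h_u^{(\ell-1)}$, where $\alpha_{v,u}$ are attention coefficients produced by a single-layer feedforward network from the node features and $\mathbf W$ is a learnable matrix; the 2D embedding is $\mathbf h^{2D}_G=\sum_{v\in V}\mathbf h_v^{(L)}$. 3D branch: a conformer is $S=\{(\mathbf r_i,Z_i)\}_{i=1}^N$ with $\mathbf r_i\in\mathbb R^3$ Cartesian coordinates and $Z_i\in\mathbb N$ atomic numbers. A geometric message-passing network (e.g. SchNet) that is $E(3)$-invariant (its per-atom outputs depend on coordinates only through interatomic distances) produces per-atom features $\mathbf h_v^{(L)}$, collected as rows of a matrix $\mathbf H_k$ for conformer $S_k$. The conformer embedding is $\mathbf h^{3D}_{S_k}=\sum_{v}(\mathbf A\mathbf h_v^{(L)}+\mathbf a)$ with learnable $\mathbf A,\mathbf a$, and $\mathbf H^{3D}$ is the matrix whose $k$-th column is $\mathbf h^{3D}_{S_k}$. Barycenter branch: each conformer gives an attributed graph $G_k=(\mathbf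 H_k,\mathbf A_k,\boldsymbol\omega_k)$ where $\mathbf A_k$ is the matrix of pairwise interatomic distances (possibly with a cutoff radius) and $\boldsymbol\omega_k=\mathbf 1_N/N$. For attributed graphs $G_1=(\mathbf H_1,\mathbf A_1,\boldsymbol\omega_1)$, $G_2=(\mathbf H_2,\mathbf A_2,\boldsymbol\omega_2)$ of orders $n_1,n_2$, the fused Gromov–Wasserstein distance is $$\mathrm{FGW}_{p,\alpha}(G_1,G_2)=\min_{\boldsymbol\pi\in\Pi(\boldsymbol\omega_1,\boldsymbol\omega_2)}\sum_{i,j,k,l}\Big[(1-\alpha)\,\|\mathbf H_1[i]-\mathbf H_2[j]\|^p+\alpha\,|\mathbf A_1[i,k]-\mathbf A_2[j,l]|^p\Big]\pi_{ij}\pi_{kl},$$ where $\Pi(\boldsymbol\omega_1,\boldsymbol\omega_2)=\{\boldsymbol\pi\in\mathbb R_{\ge0}^{n_1\times n_2}:\boldsymbol\pi\mathbf 1=\boldsymbol\omega_1,\ \boldsymbol\pi^\top\mathbf 1=\boldsymbol\omega_2\}$ and $\alpha\in[0,1]$. The FGW barycenter $\overline G=(\overline{\mathbf H},\overline{\mathbf A},\overline{\boldsymbol\omega})$ is the (taken to be unique) minimizer of $G\mapsto\sum_{k=1}^K\frac1K\mathrm{FGW}_{p,\alpha}(G,G_k)$, and $\mathbf h^{BC}=\sum_v(\overline{\mathbf A}\,\overline{\mathbf H}[v]+\overline{\mathbf a})$ with learnable $\overline{\mathbf A},\overline{\mathbf a}$. Combination: $\mathbf H^{2D}$ and $\mathbf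 H^{BC}$ are the matrices with $K$ columns each equal to $\mathbf h^{2D}_G$, respectively $\mathbf h^{BC}$. With learnable matrices $\mathbf W^{2D},\mathbf W^{3D},\mathbf W^{BC}$, set $\mathbf H^{comb}=\mathbf W^{2D}\mathbf H^{2D}+\mathbf W^{3D}\mathbf H^{3D}+\mathbf W^{BC}\mathbf H^{BC}$, and the output is $\hat y=f_{\boldsymbol\theta}(G,(S_1,\dots,S_K))=\mathbf W^G\big(\frac1K\sum_{k=1}^K\mathbf H^{comb}[k]\big)+\mathbf b^G$, where $\mathbf H^{comb}[k]$ is the $k$-th column and $\boldsymbol\theta$ collects all learnable parameters. *)

From HB Require Import structures.
From mathcomp Require Import all_boot all_order all_algebra.
From mathcomp Require Import boolp classical_sets reals.
From mathcomp Require Import topology normedtype sequences.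
From mathcomp.analysis Require Import exp.
Set Implicit Arguments. Unset Strict Implicit. Unset Printing Implicit Defensive.
Import Order.TTheory GRing.Theory Num.Theory.
Local Open Scope ring_scope.
Local Open Scope classical_set_scope.

Section Model.
Variable R : realType.

Record conformer (N : nat) := Conformer {
  pos : 'I_N -> 'rV[R]_3;
  Znum : 'I_N -> nat }.

Definition eucl_norm (n : nat) (x : 'rV[R]_n) : R :=
  Num.sqrt (\sum_(c < n) (x 0 c) ^+ 2).

Definition dist (N : nat) (S : conformer N) (i j : 'I_N) : R :=
  eucl_norm (pos S i - pos S j).

(* g(r) = Q r + t, Q orthogonal; in row-vector form r |-> r Q^T + t *)
Record E3 := MkE3 { e3Q : 'M[R]_3; e3t : 'rV[R]_3 }.
Definition is_E3 (g : E3) : Prop := (e3Q g)^T *m e3Q g = 1%:M.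
Definition e3_apply (g : E3) (r : 'rV[R]_3) : 'rV[R]_3 := r *m (e3Q g)^T + e3t g.
Definition e3_act (N : nat) (g : E3) (S : conformer N) : conformer N :=
  Conformer (fun i => e3_apply g (pos S i)) (Znum S).

Record mol_graph (N d : nat) := MolGraph {
  adj : rel 'I_N;
  feat0 : 'I_N -> 'rV[R]_d }.

(* one GAT layer: h_v' = sum_{u in N(v)} alpha_{v,u} W h_u, with alpha from a
   single-layer feedforward network (weights a1,a2, activation act) followed
   by softmax over the neighbourhood *)
Record gat_layer (d : nat) := GatLayer {
  gW : 'M[R]_d; ga1 : 'rV[R]_d; ga2 : 'rV[R]_d; gact : R -> R }.

Definition gat_score (d : nat) (l : gat_layer d) (hv hu : 'rV[R]_d) : R :=
  gact l (((hv *m gW l) *m (ga1 l)^T) 0 0 + ((hu *m gW l) *m (ga2 l)^T) 0 0).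

Definition gat_step (N d : nat) (G : mol_graph N d) (l : gat_layer d)
  (h : 'I_N -> 'rV[R]_d) : 'I_N -> 'rV[R]_d :=
  fun v => \sum_(u | adj G v u)
     (expR (gat_score l (h v) (h u)) /
      \sum_(w | adj G v w) expR (gat_score l (h v) (h w))) *: (h u *m gW l).

Definition gat_embed (N d : nat) (G : mol_graph N d) (ls : seq (gat_layer d))
  : 'rV[R]_d :=
  let hL := foldl (fun h l => gat_step G l h) (feat0 G) ls in
  \sum_(v < N) hL v.

(* attributed graph (H, A, omega) of order n with d-dim features *)
Definition agraph (n d : nat) := ('M[R]_(n, d) * 'M[R]_(n, n) * 'rV[R]_n)%type.

Definition couplings (n1 n2 : nat) (w1 : 'rV[R]_n1) (w2 : 'rV[R]_n2)
  : set 'M[R]_(n1, n2) :=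
  [set pi | (forall i j, 0 <= pi i j) /\
            (forall i, \sum_j pi i j = w1 0 i) /\
            (forall j, \sum_i pi i j = w2 0 j)].

Definition fgw_cost (p alpha : R) (n1 n2 d : nat) (G1 : agraph n1 d)
  (G2 : agraph n2 d) (pi : 'M[R]_(n1, n2)) : R :=
  let: (H1, A1, _) := G1 in let: (H2, A2, _) := G2 in
  \sum_(i < n1) \sum_(j < n2) \sum_(k < n1) \sum_(l < n2)
    ((1 - alpha) * powR (eucl_norm (row i H1 - row j H2)) p
     + alpha * powR `|A1 i k - A2 j l| p) * pi i j * pi k l.

(* FGW_{p,alpha}(G1,G2) = min over couplings (written as inf; the set of
   couplings is compact and the cost continuous, so the inf is attained) *)
Definition FGW (p alpha : R) (n1 n2 d : nat) (G1 : agraph n1 d)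
  (G2 : agraph n2 d) : R :=
  inf [set fgw_cost p alpha G1 G2 pi | pi in couplings G1.2 G2.2].

Definition admissible (n d : nat) (G : agraph n d) : Prop :=
  (forall i, 0 <= G.2 0 i) /\ \sum_i G.2 0 i = 1.

Definition bary_obj (p alpha : R) (K nb N d : nat) (Gs : 'I_K -> agraph N d)
  (G : agraph nb d) : R :=
  \sum_(k < K) K%:R^-1 * FGW p alpha G (Gs k).

Definition is_barycenter (p alpha : R) (K nb N d : nat)
  (Gs : 'I_K -> agraph N d) (G : agraph nb d) : Prop :=
  admissible G /\
  forall G' : agraph nb d, admissible G' -> bary_obj p alpha Gs G <= bary_obj p alpha Gs G'.

(* the FGW barycenter (taken to be unique; chosen by xget) *)
Definition barycenter (p alpha : R) (K nb N d : nat)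
  (Gs : 'I_K -> agraph N d) : agraph nb d :=
  xget (0, 0, 0) (is_barycenter p alpha Gs).

Record params (N d2 d e3 nb eb c o : nat) := Params {
  gat_layers : seq (gat_layer d2);
  geo : conformer N -> 'M[R]_(N, d);
  A3 : 'M[R]_(d, e3); a3 : 'rV[R]_e3;
  fgw_p : R; fgw_alpha : R;
  cutoff : option R;
  Abar : 'M[R]_(d, eb); abar : 'rV[R]_eb;
  W2D : 'M[R]_(d2, c); W3D : 'M[R]_(e3, c); WBC : 'M[R]_(eb, c);
  WG : 'M[R]_(c, o); bG : 'rV[R]_o }.

(* E(3)-invariance of the geometric network: per-atom outputs depend on the
   coordinates only through the interatomic distances (and atomic numbers) *)
Definition geo_invariant (N d : nat) (phi : conformer N -> 'M[R]_(N, d)) : Prop :=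
  forall S S' : conformer N, Znum S = Znum S' ->
    (forall i j, dist S i j = dist S' i j) -> phi S = phi S'.

Section Net.
Variables (N d2 d e3 nb eb c o : nat) (th : params N d2 d e3 nb eb c o).

Definition adj_dist (S : conformer N) : 'M[R]_N :=
  \matrix_(i, j) match cutoff th with
                 | None => dist S i j
                 | Some rc => if dist S i j <= rc then dist S i j else 0
                 end.

Definition conf_graph (S : conformer N) : agraph N d :=
  (geo th S, adj_dist S, \row_(i < N) N%:R^-1).

Definition h3D (S : conformer N) : 'rV[R]_e3 :=
  \sum_(v < N) (row v (geo th S) *m A3 th + a3 th).

Definition hBC (K : nat) (Ss : 'I_K -> conformer N) : 'rV[R]_eb :=
  let Gb : agraph nb d := barycenter (fgw_p th) (fgw_alpha th) nb (fun k => conf_graph (Ss k)) in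
  \sum_(v < nb) (row v Gb.1.1 *m Abar th + abar th).

(* row-vector convention: column k of H^comb is hcomb k *)
Definition net (G : mol_graph N d2) (K : nat) (Ss : 'I_K -> conformer N)
  : 'rV[R]_o :=
  let hcomb k := gat_embed G (gat_layers th) *m W2D th
                 + h3D (Ss k) *m W3D th + hBC Ss *m WBC th in
  (K%:R^-1 *: \sum_(k < K) hcomb k) *m WG th + bG th.

End Net.
End Model.

From HB Require Import structures.
From mathcomp Require Import all_boot all_order all_algebra all_fingroup.
From mathcomp Require Import boolp classical_sets reals.
From mathcomp Require Import topology normedtype sequences.
From mathcomp.analysis Require Import exp.
Import Order.TTheory GRing.Theory Num.Theory.
Local Open Scope ring_scope.
Set Implicit Arguments.
Unset Strict Implicit.
Unset Printing Implicit Defensive.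

(* Rigid motions preserve interatomic distances, so they change neither the
   per-atom features of the distance-based geometric network nor the
   distance matrices; hence every conformer embedding and the FGW barycenter
   are unchanged.  Reordering the conformers permutes the terms of the
   barycenter objective and of the average over conformers, both of which are
   symmetric sums, so the output is unchanged as well. *)

Section RigidMotions.
Variable R : realType.

Lemma eucl_norm_mulmx_orthogonal n (Q : 'M[R]_n) (x : 'rV[R]_n) :
  Q^T *m Q = 1%:M -> eucl_norm (x *m Q^T) = eucl_norm x.
Proof.
have sumsqE (y : 'rV[R]_n) : \sum_(i < n) y 0 i ^+ 2 = (y *m y^T) 0 0.
  by rewrite mxE; apply: eq_bigr => i _; rewrite mxE expr2.
move=> QTQ; rewrite /eucl_norm !sumsqE.
by rewrite trmx_mul trmxK mulmxA -(mulmxA _ _ Q) QTQ mulmx1.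
Qed.

Lemma e3_applyB (g : E3 R) (r r' : 'rV[R]_3) :
  e3_apply g r - e3_apply g r' = (r - r') *m (e3Q g)^T.
Proof. by rewrite /e3_apply mulmxBl opprD addrACA subrr addr0. Qed.

Lemma dist_e3_act N (g : E3 R) (S : conformer R N) (i j : 'I_N) :
  is_E3 g -> dist (e3_act g S) i j = dist S i j.
Proof. by move=> Eg; rewrite /dist /= e3_applyB eucl_norm_mulmx_orthogonal. Qed.

Lemma geo_invariant_e3_act N d (phi : conformer R N -> 'M[R]_(N, d))
    (g : E3 R) (S : conformer R N) :
  geo_invariant phi -> is_E3 g -> phi (e3_act g S) = phi S.
Proof. by move=> phiI Eg; apply: phiI => // i j; apply: dist_e3_act. Qed.

End RigidMotions.

Section Reordering.
Variables (R : realType) (p alpha : R) (K nb N d : nat) (s : 'S_K).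
Variable Gs : 'I_K -> agraph R N d.

Lemma bary_obj_perm (Gb : agraph R nb d) :
  bary_obj p alpha (fun k => Gs (s k)) Gb = bary_obj p alpha Gs Gb.
Proof. by rewrite /bary_obj [RHS](reindex_inj (@perm_inj _ s)). Qed.

Lemma is_barycenter_perm :
  is_barycenter p alpha (fun k => Gs (s k))
  = is_barycenter p alpha Gs :> (agraph R nb d -> Prop).
Proof.
apply: funext => Gb; rewrite /is_barycenter; apply/propext.
by split=> -[Gb_adm Gb_min]; split=> // G' G'_adm;
  move: (Gb_min G' G'_adm); rewrite !bary_obj_perm.
Qed.

Lemma barycenter_perm :
  barycenter p alpha nb (fun k => Gs (s k)) = barycenter p alpha nb Gs.
Proof. by rewrite /barycenter is_barycenter_perm. Qed.

End Reordering.

Section Network.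
Variables (R : realType) (N d2 d e3 nb eb c o : nat).
Variable th : params R N d2 d e3 nb eb c o.

Lemma eq_net (G : mol_graph R N d2) K (Ss Ss' : 'I_K -> conformer R N) :
  (forall k, h3D th (Ss' k) = h3D th (Ss k)) -> hBC th Ss' = hBC th Ss ->
  net th G Ss' = net th G Ss.
Proof.
move=> E3D EBC; rewrite /net EBC.
by under eq_bigr => k _ do rewrite E3D.
Qed.

Section E3Invariance.
Hypothesis geoI : geo_invariant (geo th).
Variables (g : E3 R) (S : conformer R N).
Hypothesis Eg : is_E3 g.

Lemma h3D_e3_act : h3D th (e3_act g S) = h3D th S.
Proof. by rewrite /h3D geo_invariant_e3_act. Qed.

Lemma conf_graph_e3_act : conf_graph th (e3_act g S) = conf_graph th S.
Proof.
rewrite /conf_graph geo_invariant_e3_act //; congr (_, _, _).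
by apply/matrixP => i j; rewrite !mxE dist_e3_act.
Qed.

End E3Invariance.

Lemma hBC_e3_act K (gs : 'I_K -> E3 R) (Ss : 'I_K -> conformer R N) :
  geo_invariant (geo th) -> (forall k, is_E3 (gs k)) ->
  hBC th (fun k => e3_act (gs k) (Ss k)) = hBC th Ss.
Proof.
move=> geoI Egs; have EG : (fun k => conf_graph th (e3_act (gs k) (Ss k)))
                           = (fun k => conf_graph th (Ss k)).
  by apply: funext => k; rewrite conf_graph_e3_act.
by rewrite /hBC EG.
Qed.

Lemma net_e3_act (G : mol_graph R N d2) K (gs : 'I_K -> E3 R)
    (Ss : 'I_K -> conformer R N) :
  geo_invariant (geo th) -> (forall k, is_E3 (gs k)) ->
  net th G (fun k => e3_act (gs k) (Ss k)) = net th G Ss.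
Proof.
move=> geoI Egs; apply: eq_net; last exact: hBC_e3_act.
by move=> k; apply: h3D_e3_act.
Qed.

Lemma hBC_perm K (s : 'S_K) (Ss : 'I_K -> conformer R N) :
  hBC th (fun k => Ss (s k)) = hBC th Ss.
Proof. by rewrite /hBC (barycenter_perm _ _ nb s (fun k => conf_graph th (Ss k))). Qed.

Lemma net_perm (G : mol_graph R N d2) K (s : 'S_K) (Ss : 'I_K -> conformer R N) :
  net th G (fun k => Ss (s k)) = net th G Ss.
Proof. by rewrite /net hBC_perm [in RHS](reindex_inj (@perm_inj _ s)). Qed.

End Network.

Theorem theorem3p1 (R : realType) (N d2 d e3 nb eb c o : nat)
  (th : params R N d2 d e3 nb eb c o)
  (Hgeo : geo_invariant (geo th))
  (Halpha : 0 <= fgw_alpha th <= 1)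
  (G : mol_graph R N d2) (K : nat) (Ss : 'I_K -> conformer R N)
  (Huniq : exists! Gb : agraph R nb d,
      is_barycenter (fgw_p th) (fgw_alpha th)
        (fun k => conf_graph th (Ss k)) Gb) :
  (forall gs : 'I_K -> E3 R, (forall k, is_E3 (gs k)) ->
     net th G (fun k => e3_act (gs k) (Ss k)) = net th G Ss) /\
  (forall s : 'S_K, net th G (fun k => Ss (s k)) = net th G Ss).
Proof.
split=> [gs Egs | s]; first exact: net_e3_act.
exact: net_perm.
Qed.
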